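(* For integers $n \ge m > 1$, $\det'(K_{n,m}) = n-1$ if $n \neq m$, and $\det'(K_{n,m}) = n$ if $n = m$.
   Context: $K_{n,m}$ is the complete bipartite graph with parts of sizes $n$ and $m$. For a graph $G$ with at most one isolated vertex and no component isomorphic to $K_2$, an edge subset $T$ is an edge determining set if the only automorphism $\phi$ of $G$ satisfying $\{\phi(u),\phi(v)\}=\{u,v\}$ for all $\{u,v\}\in T$ is the identity; the determining index $\det'(G)$ is the minimum size of an edge determining set. *)

From mathcomp Require Import all_boot all_order all_fingroup.
Set Implicit Arguments. Unset Strict Implicit. Unset Printing Implicit Defensive.

(* A simple graph on a finite vertex type V, given by a symmetric
   irreflexive adjacency relation e. *)

Definition edges (V : finType) (e : rel V) : {set {set V}} :=
  [set [set x.1; x.2] | x in [set x : V * V | e x.1 x.2]].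

Definition is_aut (V : finType) (e : rel V) (phi : {perm V}) : bool :=
  [forall u, forall v, e (phi u) (phi v) == e u v].

Definition edge_determining (V : finType) (e : rel V) (T : {set {set V}}) : bool :=
  (T \subset edges e) &&
  [forall phi : {perm V},
    (is_aut e phi && [forall E in T, phi @: E == E]) ==> (phi == 1%g)].

Definition det_index (V : finType) (e : rel V) : nat :=
  \big[minn/#|edges e|.+1]_(T : {set {set V}} | edge_determining e T) #|T|.

Definition Knm_rel (n m : nat) : rel ('I_n + 'I_m)%type :=
  fun x y => match x, y with
             | inl _, inr _ | inr _, inl _ => true
             | _, _ => false
             end.
Arguments Knm_rel : clear implicits.

From mathcomp Require Import all_boot all_order all_fingroup zify.
Set Implicit Arguments. Unset Strict Implicit. Unset Printing Implicit Defensive.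
Import Order.TTheory.

(* An automorphism of K_{n,m} either preserves or exchanges the two sides.
   If it fixes every edge of T setwise, a side-preserving one fixes every
   vertex covered by T, and an exchanging one fixes no vertex lying on two
   edges of T.  Hence T is determining as soon as each side has at most one
   uncovered vertex (two uncovered vertices of a side could be transposed)
   and some vertex has degree at least two in T.  Covering all but one
   vertex of the n-side needs n-1 edges, which is enough when n > m.  When
   #|T| < n = m, counting forces T to be a matching missing exactly one
   vertex on each side; exchanging the ends of every edge of T together with
   the two uncovered vertices is then a nontrivial automorphism fixing every
   edge, so n edges are needed. *)

Lemma edge_determining_sub (V : finType) (e : rel V) (T : {set {set V}}) :
  edge_determining e T -> T \subset edges e.
Proof. by case/andP. Qed.

Lemma det_index_eq (V : finType) (e : rel V) (T0 : {set {set V}}) :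
  edge_determining e T0 ->
  (forall T, edge_determining e T -> #|T0| <= #|T|) ->
  det_index e = #|T0|.
Proof.
move=> detT0 minT0; apply/eqP; rewrite eqn_leq; apply/andP; split.
  by rewrite /det_index -minEnat -leEnat; apply: bigmin_le_cond.
rewrite /det_index -minEnat -leEnat; apply/bigmin_geP; split=> //.
by rewrite leEnat ltnW // ltnS subset_leq_card // edge_determining_sub.
Qed.

Section CompleteBipartite.

Variables n m : nat.
Local Notation V := ('I_n + 'I_m)%type.
Local Notation e := (Knm_rel n m).

Definition side (x : V) : bool := if x is inl _ then true else false.

Definition covered (T : {set {set V}}) (x : V) := [exists E in T, x \in E].

Definition edge_at (T : {set {set V}}) (x : V) := odflt set0 [pick E in T | x \in E].

Lemma Knm_relE x y : e x y = (side x != side y).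
Proof. by case: x; case: y. Qed.

Lemma edgesP E : E \in edges e -> exists a b, E = [set inl a; inr b].
Proof.
case/imsetP => [[x y]]; rewrite inE /= => hxy ->.
case: x hxy => a; case: y => b //= _; first by exists a, b.
by exists b, a; rewrite setUC.
Qed.

Lemma edge_neq x y : [set x; y] \in edges e -> x != y.
Proof.
case/edgesP=> a [b hE]; apply/eqP=> eq_xy; move: hE; rewrite eq_xy setUid => hE.
have : inl a \in [set y] by rewrite hE set21.
have : inr b \in [set y] by rewrite hE set22.
by rewrite !inE => /eqP <-.
Qed.

Lemma edge_side_inj E x y :
  E \in edges e -> x \in E -> y \in E -> side x = side y -> x = y.
Proof. by case/edgesP=> a [b ->]; rewrite !inE => /orP[]/eqP-> /orP[]/eqP->. Qed.

Lemma edge_of_sides E x y :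
  E \in edges e -> x \in E -> y \in E -> side x != side y -> E = [set x; y].
Proof.
case/edgesP=> a [b ->]; rewrite !inE => /orP[]/eqP-> /orP[]/eqP-> //= _.
exact: setUC.
Qed.

Lemma covered_edge_at T x :
  covered T x -> edge_at T x \in T /\ x \in edge_at T x.
Proof.
case/exists_inP=> E ET xE; rewrite /edge_at.
by case: pickP => [E' /andP[]|/(_ E)] //=; rewrite ET xE.
Qed.

Lemma is_aut_KnmP (phi : {perm V}) :
  is_aut e phi <->
  (forall x, side (phi x) = side x) \/ (forall x, side (phi x) = ~~ side x).
Proof.
split=> [/forallP aut|[] side_phi].
- have aut_side u v : (side (phi u) != side (phi v)) = (side u != side v).
    by have /forallP/(_ v)/eqP := aut u; rewrite !Knm_relE.
  case: (boolP [exists x, side (phi x) == side x]) => [/existsP[x /eqP sx]|/existsPn sx].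
    left=> y; have := aut_side x y; rewrite sx.
    by case: (side x); case: (side y); case: (side (phi y)).
  by right=> y; move: (sx y); case: (side (phi y)); case: (side y).
- apply/forallP=> u; apply/forallP=> v; rewrite !Knm_relE !side_phi //.
- apply/forallP=> u; apply/forallP=> v; rewrite !Knm_relE !side_phi //.
  by case: (side u); case: (side v).
Qed.

Lemma uncovered_eq T x y : edge_determining e T ->
  side x = side y -> ~~ covered T x -> ~~ covered T y -> x = y.
Proof.
move=> /andP[_ /forallP/(_ (tperm x y))] det sxy ncx ncy.
apply/eqP; apply: contraT => nxy; move: det.
have -> : is_aut e (tperm x y).
  by apply/is_aut_KnmP; left=> z; case: tpermP => // ->.
have -> : [forall E in T, tperm x y @: E == E].
  apply/forall_inP=> E ET; apply/eqP; rewrite -[RHS]imset_id.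
  apply: eq_in_imset=> z zE; apply: tpermD; apply/eqP=> eq_z.
  - by case/negP: ncx; apply/exists_inP; exists E; rewrite // eq_z.
  - by case/negP: ncy; apply/exists_inP; exists E; rewrite // eq_z.
move=> /implyP/(_ isT)/eqP/permP/(_ x); rewrite tpermL perm1 => eq_yx.
by rewrite eq_yx eqxx in nxy.
Qed.

Section OneSide.

Variables (I : finType) (h : I -> V).
Hypotheses (h_inj : injective h) (h_side : forall i j, side (h i) = side (h j)).
Variable T : {set {set V}}.
Hypothesis detT : edge_determining e T.

Lemma edge_at_inj : {in [set i | covered T (h i)] &, injective (edge_at T \o h)}.
Proof.
move=> i j; rewrite !inE => /covered_edge_at[ET hiE] /covered_edge_at[_ hjE] /= eqE.
apply: h_inj; apply: (edge_side_inj (subsetP (edge_determining_sub detT) _ ET)) => //.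
by rewrite eqE.
Qed.

Lemma card_covered_le : #|[set i | covered T (h i)]| <= #|T|.
Proof.
rewrite -(card_in_imset edge_at_inj); apply/subset_leq_card/subsetP=> E.
by case/imsetP=> i; rewrite inE => /covered_edge_at[ET _] ->.
Qed.

Lemma card_uncovered_le : #|~: [set i | covered T (h i)]| <= 1.
Proof.
rewrite leqNgt; apply/card_gt1P=> -[i [j [+ + /eqP[]]]]; rewrite !inE => nci ncj.
by apply: h_inj; apply: (uncovered_eq detT).
Qed.

Lemma card_covered_ge : #|I|.-1 <= #|[set i | covered T (h i)]|.
Proof. by have := cardsC [set i | covered T (h i)]; have := card_uncovered_le; lia. Qed.

Lemma card_pred_le : #|I|.-1 <= #|T|.
Proof. exact: leq_trans card_covered_ge card_covered_le. Qed.

Section FewerEdgesThanVertices.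

Hypothesis ltTI : #|T| < #|I|.

Lemma exists_uncovered : exists i, ~~ covered T (h i).
Proof.
have : 0 < #|~: [set i | covered T (h i)]|.
  by have := cardsC [set i | covered T (h i)]; have := card_covered_le; lia.
by case/card_gt0P=> i; rewrite !inE; exists i.
Qed.

Lemma edge_at_onto : (edge_at T \o h) @: [set i | covered T (h i)] = T.
Proof.
apply/eqP; rewrite eqEcard (card_in_imset edge_at_inj); apply/andP; split.
  by apply/subsetP=> E /imsetP[i]; rewrite inE => /covered_edge_at[ET _] ->.
apply: leq_trans card_covered_ge; by rewrite -ltnS (ltn_predK ltTI).
Qed.

Lemma edge_at_side_unique E i : E \in T -> h i \in E -> E = edge_at T (h i).
Proof.
rewrite -{1}edge_at_onto => /imsetP[j]; rewrite inE => /covered_edge_at[ET hjE] -> hiE.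
congr edge_at; apply: (edge_side_inj (subsetP (edge_determining_sub detT) _ ET)) => //.
Qed.

End FewerEdgesThanVertices.

End OneSide.

Section SwapInvolution.

Variables (T : {set {set V}}) (a0 : 'I_n) (b0 : 'I_m).
Hypotheses (detT : edge_determining e T) (ltTn : #|T| < n) (ltTm : #|T| < m).
Hypotheses (nca0 : ~~ covered T (inl a0)) (ncb0 : ~~ covered T (inr b0)).

Lemma edge_unique E E' x : E \in T -> E' \in T -> x \in E -> x \in E' -> E = E'.
Proof.
case: x => [a|b] ET E'T xE xE'.
- have ltT : #|T| < #|'I_n| by rewrite card_ord.
  have uniq := edge_at_side_unique (@inl_inj _ _) (fun _ _ => erefl) detT ltT.
  by rewrite (uniq _ _ ET xE) (uniq _ _ E'T xE').
- have ltT : #|T| < #|'I_m| by rewrite card_ord.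
  have uniq := edge_at_side_unique (@inr_inj _ _) (fun _ _ => erefl) detT ltT.
  by rewrite (uniq _ _ ET xE) (uniq _ _ E'T xE').
Qed.

Definition swap (x : V) : V :=
  if [pick y | [set x; y] \in T] is Some y then y
  else if x == inl a0 then inr b0 else inl a0.

Lemma swap_edge x y : [set x; y] \in T -> swap x = y.
Proof.
move=> xyT; rewrite /swap; case: pickP => [z xzT|/(_ y)]; last by rewrite xyT.
have eq_xz := edge_unique xzT xyT (set21 x z) (set21 x y).
have : y \in [set x; z] by rewrite eq_xz set22.
rewrite !inE => /orP[/eqP eq_yx|/eqP //].
by have := edge_neq (subsetP (edge_determining_sub detT) _ xyT); rewrite eq_yx eqxx.
Qed.

Lemma swap_edge_ends a b :
  [set inl a; inr b] \in T -> swap (inl a) = inr b /\ swap (inr b) = inl a.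
Proof.
by move=> abT; split; apply: swap_edge; rewrite // setUC.
Qed.

Lemma swap_uncovered x :
  ~~ covered T x -> swap x = if x == inl a0 then inr b0 else inl a0.
Proof.
move=> ncx; rewrite /swap; case: pickP => // y xyT.
by case/negP: ncx; apply/exists_inP; exists [set x; y]; rewrite // set21.
Qed.

Lemma swap_pairs x : exists a b,
  [/\ x = inl a \/ x = inr b, swap (inl a) = inr b & swap (inr b) = inl a].
Proof.
case: (boolP (covered T x)) => [/exists_inP[E ET xE]|ncx].
  have [a [b eqE]] := edgesP (subsetP (edge_determining_sub detT) _ ET).
  have [sa sb] : swap (inl a) = inr b /\ swap (inr b) = inl a.
    by apply: swap_edge_ends; rewrite -eqE.
  exists a, b; split=> //.
  by move: xE; rewrite eqE !inE => /orP[]/eqP ->; [left|right].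
exists a0, b0; split; rewrite ?swap_uncovered ?eqxx //=.
by case: x ncx => [a|b] ncx; [left|right]; apply: (uncovered_eq detT).
Qed.

Lemma swapK : involutive swap.
Proof. by move=> x; have [a [b [[]-> sa sb]]] := swap_pairs x; rewrite ?sa ?sb. Qed.

Lemma side_swap x : side (swap x) = ~~ side x.
Proof. by have [a [b [[]-> sa sb]]] := swap_pairs x; rewrite ?sa ?sb. Qed.

Lemma few_edges_not_determining : False.
Proof.
case/andP: detT => _ /forallP/(_ (perm (can_inj swapK))).
have -> : is_aut e (perm (can_inj swapK)).
  by apply/is_aut_KnmP; right=> x; rewrite permE side_swap.
have -> : [forall E in T, perm (can_inj swapK) @: E == E].
  apply/forall_inP=> E ET; have [a [b eqE]] := edgesP (subsetP (edge_determining_sub detT) _ ET).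
  have [sa sb] : swap (inl a) = inr b /\ swap (inr b) = inl a.
    by apply: swap_edge_ends; rewrite -eqE.
  by rewrite eqE imsetU1 imset_set1 !permE sa sb setUC.
move=> /implyP/(_ isT)/eqP/permP/(_ (inl a0)).
by rewrite permE perm1 swap_uncovered ?eqxx.
Qed.

End SwapInvolution.

Lemma minn_le_determining T : edge_determining e T -> minn n m <= #|T|.
Proof.
move=> detT; rewrite leqNgt leq_min; apply/andP=> -[ltTn ltTm].
have ltTn' : #|T| < #|'I_n| by rewrite card_ord.
have ltTm' : #|T| < #|'I_m| by rewrite card_ord.
have [a0 nca0] := exists_uncovered (@inl_inj _ _) (fun _ _ => erefl) detT ltTn'.
have [b0 ncb0] := exists_uncovered (@inr_inj _ _) (fun _ _ => erefl) detT ltTm'.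
exact: (few_edges_not_determining detT ltTn ltTm nca0 ncb0).
Qed.

Lemma pred_le_determining T : edge_determining e T -> n.-1 <= #|T|.
Proof.
move=> detT; have := card_pred_le (@inl_inj _ _) (fun _ _ => erefl) detT.
by rewrite card_ord.
Qed.

Lemma edge_determining_Knm (T : {set {set V}}) :
  T \subset edges e ->
  (forall x y, side x = side y -> ~~ covered T x -> ~~ covered T y -> x = y) ->
  (exists x E E', [/\ E \in T, E' \in T, E != E', x \in E & x \in E']) ->
  edge_determining e T.
Proof.
move=> sub_T unc_eq [x0 [E0 [E0' [E0T E0'T neqE x0E x0E']]]].
rewrite /edge_determining sub_T; apply/forallP=> phi; apply/implyP.
case/andP=> /is_aut_KnmP aut /forall_inP fixE.
have mem_phi E x : E \in T -> x \in E -> phi x \in E.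
  by move=> ET xE; rewrite -(eqP (fixE E ET)); apply: imset_f.
case: aut => side_phi.
  have fix_cov x : covered T x -> phi x = x.
    case/exists_inP=> E ET xE.
    by apply: (edge_side_inj (subsetP sub_T _ ET)) => //; apply: mem_phi.
  apply/eqP/permP=> x; rewrite perm1.
  have [/fix_cov //|ncx] := boolP (covered T x).
  have [/fix_cov/perm_inj //|ncpx] := boolP (covered T (phi x)).
  exact: unc_eq.
have opp_x0 : side (phi x0) != side x0 by rewrite side_phi; case: (side x0).
case/negP: neqE; apply/eqP.
rewrite (edge_of_sides (subsetP sub_T _ E0T) (mem_phi _ _ E0T x0E) x0E opp_x0).
by rewrite (edge_of_sides (subsetP sub_T _ E0'T) (mem_phi _ _ E0'T x0E') x0E' opp_x0).
Qed.

Section PairEdges.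

Variables (K : finType) (f : K -> 'I_n) (g : K -> 'I_m).

Definition pair_edges : {set {set V}} := [set [set inl (f k); inr (g k)] | k : K].

Lemma pair_edges_sub : pair_edges \subset edges e.
Proof.
apply/subsetP=> E /imsetP[k _ ->]; apply/imsetP.
by exists (inl (f k), inr (g k)); rewrite ?inE.
Qed.

Lemma covered_pair_edges_inl a : covered pair_edges (inl a) = (a \in codom f).
Proof.
apply/exists_inP/codomP=> [[E /imsetP[k _ ->]]|[k ->]].
  by rewrite !inE orbF => /eqP[->]; exists k.
by exists [set inl (f k); inr (g k)]; [apply/imsetP; exists k | rewrite set21].
Qed.

Lemma covered_pair_edges_inr b : covered pair_edges (inr b) = (b \in codom g).
Proof.
apply/exists_inP/codomP=> [[E /imsetP[k _ ->]]|[k ->]].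
  by rewrite !inE => /eqP[->]; exists k.
by exists [set inl (f k); inr (g k)]; [apply/imsetP; exists k | rewrite set22].
Qed.

Hypothesis fg_inj : injective (fun k => (f k, g k)).

Lemma pair_edge_inj : injective (fun k => [set (inl (f k) : V); inr (g k)]).
Proof.
move=> k k' eq_kk'; apply: fg_inj.
have : inl (f k) \in [set (inl (f k') : V); inr (g k')] by rewrite -eq_kk' set21.
have : inr (g k) \in [set (inl (f k') : V); inr (g k')] by rewrite -eq_kk' set22.
by rewrite !inE orbF => /eqP[->] /eqP[->].
Qed.

Lemma card_pair_edges : #|pair_edges| = #|K|.
Proof. exact: card_imset pair_edge_inj. Qed.

Lemma pair_edges_determining :
  (forall a a', a \notin codom f -> a' \notin codom f -> a = a') ->
  (forall b b', b \notin codom g -> b' \notin codom g -> b = b') ->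
  (exists k k', k != k' /\ (f k = f k' \/ g k = g k')) ->
  edge_determining e pair_edges.
Proof.
move=> unc_f unc_g [k [k' [neq_k shared]]].
apply: edge_determining_Knm; first exact: pair_edges_sub.
  case=> [a|b] [a'|b'] //= _.
    by rewrite !covered_pair_edges_inl => /unc_f eq_a /eq_a ->.
  by rewrite !covered_pair_edges_inr => /unc_g eq_b /eq_b ->.
have neq_E : [set (inl (f k) : V); inr (g k)] != [set inl (f k'); inr (g k')].
  by apply: contra neq_k => /eqP/pair_edge_inj ->.
have kE : [set inl (f k); inr (g k)] \in pair_edges by apply/imsetP; exists k.
have k'E : [set inl (f k'); inr (g k')] \in pair_edges by apply/imsetP; exists k'.
case: shared => [eq_f|eq_g].
  exists (inl (f k)), [set inl (f k); inr (g k)], [set inl (f k'); inr (g k')].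
  by rewrite kE k'E neq_E set21 eq_f set21.
exists (inr (g k)), [set inl (f k); inr (g k)], [set inl (f k'); inr (g k')].
by rewrite kE k'E neq_E set22 eq_g set22.
Qed.

End PairEdges.

End CompleteBipartite.

Lemma det_index_Kn n : det_index (Knm_rel n.+2 n.+2) = n.+2.
Proof.
pose f (i : 'I_n.+2) : 'I_n.+2 := if i == ord_max then ord0 else i.
have fg_inj : injective (fun i => (f i, id i)) by move=> i j [_ ->].
have det_pairs : edge_determining (Knm_rel n.+2 n.+2) (pair_edges f id).
  apply: (pair_edges_determining fg_inj).
  - have unc a : a \notin codom f -> a = ord_max.
      move=> na; apply/eqP; apply: contraNT na => ne.
      by apply/codomP; exists a; rewrite /f (negbTE ne).
    by move=> a a' /unc -> /unc ->.
  - by move=> b b' /negP[]; apply/codomP; exists b.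
  - exists ord0, ord_max; split=> //.
    by left; rewrite /f eqxx; case: eqP.
rewrite (det_index_eq det_pairs) (card_pair_edges fg_inj) card_ord // => T detT.
by have := minn_le_determining detT; rewrite minnn.
Qed.

Lemma det_index_Knm_lt n m : m < n -> det_index (Knm_rel n.+2 m.+2) = n.+1.
Proof.
move=> lt_mn.
(* Edges {a_i, b_(min i m)} for i <= n: b_m lies on the edges i = m and i = m + 1. *)
pose f (i : 'I_n.+1) : 'I_n.+2 := widen_ord (leqnSn _) i.
pose g (i : 'I_n.+1) : 'I_m.+2 := inord (minn i m).
have fg_inj : injective (fun i => (f i, g i)).
  by move=> i j [eq_ij _]; apply: val_inj.
have det_pairs : edge_determining (Knm_rel n.+2 m.+2) (pair_edges f g).
  apply: (pair_edges_determining fg_inj).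
  - have unc a : a \notin codom f -> a = ord_max.
      move=> na; apply/val_inj/eqP; rewrite /=; apply: contraNT na => ne.
      have lt_a : a < n.+1 by have := ltn_ord a; lia.
      by apply/codomP; exists (Ordinal lt_a); apply: val_inj.
    by move=> a a' /unc -> /unc ->.
  - have unc b : b \notin codom g -> b = ord_max.
      move=> nb; apply/val_inj/eqP; rewrite /=; apply: contraNT nb => ne.
      have lt_b : b < n.+1 by have := ltn_ord b; lia.
      apply/codomP; exists (Ordinal lt_b); apply: val_inj.
      by rewrite /g /= inordK; have := ltn_ord b; lia.
    by move=> b b' /unc -> /unc ->.
  - have lt_m : m < n.+1 by lia.
    have lt_m1 : m.+1 < n.+1 by lia.
    exists (Ordinal lt_m), (Ordinal lt_m1); split; first by rewrite -val_eqE /=; lia.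
    by right; rewrite /g /= minnn (minn_idPr (leqnSn m)).
rewrite (det_index_eq det_pairs) (card_pair_edges fg_inj) card_ord // => T detT.
exact: pred_le_determining detT.
Qed.

Theorem theorem7 (n m : nat) (Hnm : m <= n) (Hm : 1 < m) :
  det_index (Knm_rel n m) = (if n == m then n else n.-1).
Proof.
case: m Hm Hnm => [|[|m]] // _; case: n => [|[|n]] // Hnm.
case: eqP => [[->]|neq_nm]; first exact: det_index_Kn.
by apply: det_index_Knm_lt; lia.
Qed.
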